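(* Let $n\ge 4$, let $\beta\in PB_n$ be a Brunnian braid, and let $i,j,k\in\{1,\dots,n\}$ be distinct. Then $\phi_{(i,j,k)}(\phi_n(\beta))=1$ in the group $F$ defined below.
   Context: $PB_n$ is the pure braid group with standard generators $b_{ij}$ ($1\le i<j\le n$); $\beta$ is Brunnian if deleting any single strand (the homomorphism $PB_n\to PB_{n-1}$ sending $b_{ij}\mapsto 1$ if $m\in\{i,j\}$ and relabelling indices $>m$ down by one otherwise) gives the trivial braid, for every strand $m$. $G_n^3$ is the group with generators $a_{ijk}$, one for each $3$-element subset $\{i,j,k\}\subset\{1,\dots,n\}$ (symmetric in the indices), and relations $a_{ijk}^2=1$; $a_{ijk}a_{stu}=a_{stu}a_{ijk}$ if $|\{i,j,k\}\cap\{s,t,u\}|<2$; $a_{ijk}a_{ijl}a_{ikl}a_{jkl}=a_{jkl}a_{ikl}a_{ijl}a_{ijk}$ for distinct $i,j,k,l$. For $1\le i<j\le n$ let $c_{i,j}=a_{i,j,j+1}\cdots a_{i,j,n}\,a_{i,j,1}\cdots a_{i,j,j-1}$ (factor with third index $i$ omitted), and let $\phi_n\colon PB_n\to G_n^3$ be the homomorphism $\phi_n(b_{ij})=c_{i,i+1}^{-1}\cdots c_{i,j-1}^{-1}c_{i,j}^2c_{i,j-1}\cdots c_{i,i+1}$. Fix distinct $i,j,k$. Let $F$ be the group generated by all maps $\sigma\colon\{1,\dots,n\}\setminus\{i,j,k\}\to\mathbb{Z}_2\times\mathbb{Z}_2$ subject only to $\sigma^2=1$ (a free product of $2^{2(n-3)}$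 copies of $\mathbb{Z}_2$). For a word $w$ in the generators of $G_n^3$ and each occurrence $c$ of the letter $a_{ijk}$ in $w$, define $i_c\colon\{1,\dots,n\}\setminus\{i,j,k\}\to\mathbb{Z}_2\times\mathbb{Z}_2$ by $i_c(l)=(N_{jkl}+N_{ijl},\,N_{ikl}+N_{ijl})\bmod 2$, where $N_{stu}$ is the number of occurrences of $a_{stu}$ in $w$ before $c$. If $c_1,\dots,c_m$ are the occurrences of $a_{ijk}$ in $w$ in order, set $\phi_{(i,j,k)}(w)=i_{c_1}i_{c_2}\cdots i_{c_m}\in F$. It is a standing fact from the paper that on the subgroup of even elements of $G_n^3$, which contains $\phi_n(PB_n)$, this value depends only on the group element represented by $w$; thus $\phi_{(i,j,k)}\circ\phi_n\colon PB_n\to F$ is well defined. *)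

From mathcomp Require Import all_boot.
Set Implicit Arguments. Unset Strict Implicit. Unset Printing Implicit Defensive.

(* Congruence on words generated by a set of defining relations R :
   the group (or monoid) presented by these relations. *)
Inductive wcong (A : Type) (R : seq A -> seq A -> Prop) : seq A -> seq A -> Prop :=
| wcong_step : forall u v l r, R l r -> wcong R (u ++ l ++ v) (u ++ r ++ v)
| wcong_refl : forall w, wcong R w w
| wcong_sym : forall w1 w2, wcong R w1 w2 -> wcong R w2 w1
| wcong_trans : forall w1 w2 w3, wcong R w1 w2 -> wcong R w2 w3 -> wcong R w1 w3.

(* ---------- Braid group B_n (Artin presentation) ----------
   letter (k, true) = sigma_k, (k, false) = sigma_k^{-1}, 1 <= k <= n-1. *)
Definition braid_rel (n : nat) (l r : seq (nat * bool)) : Prop :=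
  (exists k b, 1 <= k <= n.-1 /\ l = [:: (k, b); (k, ~~ b)] /\ r = [::])
  \/ (exists k m, 1 <= k <= n.-1 /\ 1 <= m <= n.-1 /\ k.+1 < m /\
        l = [:: (k, true); (m, true)] /\ r = [:: (m, true); (k, true)])
  \/ (exists k, 1 <= k /\ k.+1 <= n.-1 /\
        l = [:: (k, true); (k.+1, true); (k, true)] /\
        r = [:: (k.+1, true); (k, true); (k.+1, true)]).

Definition braid_eq (n : nat) := wcong (braid_rel n).

(* ---------- Pure braid group PB_n ----------
   letter (i, j, true) = b_ij, (i, j, false) = b_ij^{-1}, 1 <= i < j <= n, with
   b_ij = sigma_{j-1} ... sigma_{i+1} sigma_i^2 sigma_{i+1}^{-1} ... sigma_{j-1}^{-1}. *)
Definition pb_letter_braid (x : nat * nat * bool) : seq (nat * bool) :=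
  let: (i, j, e) := x in
  let mid := iota i.+1 (j - i.+1) in
  [seq (k, true) | k <- rev mid] ++ [:: (i, e); (i, e)] ++ [seq (k, false) | k <- mid].

Definition pb_braid (w : seq (nat * nat * bool)) : seq (nat * bool) :=
  flatten (map pb_letter_braid w).

Definition pb_valid (n : nat) (w : seq (nat * nat * bool)) : bool :=
  all (fun x : nat * nat * bool => let: (i, j, _) := x in (1 <= i) && (i < j) && (j <= n)) w.

Definition pb_trivial (n : nat) (w : seq (nat * nat * bool)) : Prop :=
  braid_eq n (pb_braid w) [::].

Definition delete_strand (m : nat) (w : seq (nat * nat * bool)) : seq (nat * nat * bool) :=
  [seq (let: (i, j, e) := x in (if m < i then i.-1 else i, if m < j then j.-1 else j, e))
  | x <- w & (let: (i, j, _) := x in (i != m) && (j != m))].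

Definition brunnian (n : nat) (w : seq (nat * nat * bool)) : Prop :=
  forall m, 1 <= m <= n -> pb_trivial n.-1 (delete_strand m w).

(* ---------- Words in G_n^3 ----------
   generator a_{ijk} is represented by the sorted list of its 3 indices;
   since a_{ijk}^2 = 1, inverses of words are reversed words. *)
Definition gkey (i j k : nat) : seq nat := sort leq [:: i; j; k].

(* c_{i,j} = a_{i,j,j+1} ... a_{i,j,n} a_{i,j,1} ... a_{i,j,j-1}, third index i omitted *)
Definition c_word (n i j : nat) : seq (seq nat) :=
  [seq gkey i j l | l <- iota j.+1 (n - j) ++ iota 1 j.-1 & l != i].

Definition phi_gen_word (n i j : nat) : seq (seq nat) :=
  let P := flatten [seq rev (c_word n i l) | l <- iota i.+1 (j - i.+1)] in
  P ++ c_word n i j ++ c_word n i j ++ rev P.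

Definition phi_n (n : nat) (w : seq (nat * nat * bool)) : seq (seq nat) :=
  flatten [seq (let: (i, j, e) := x in
                if e then phi_gen_word n i j else rev (phi_gen_word n i j)) | x <- w].

(* ---------- The group F and the map phi_(i,j,k) ----------
   A map sigma : {1..n} \ {i,j,k} -> Z_2 x Z_2 is represented by its list of values
   on the increasing enumeration of {1..n} \ {i,j,k} (Z_2 = bool, addition = xor/odd). *)
Definition F_dom (n i j k : nat) : seq nat := [seq l <- iota 1 n | l \notin [:: i; j; k]].

Definition ic (n i j k : nat) (pre : seq (seq nat)) : seq (bool * bool) :=
  [seq (odd (count_mem (gkey j k l) pre + count_mem (gkey i j l) pre),
        odd (count_mem (gkey i k l) pre + count_mem (gkey i j l) pre))
  | l <- F_dom n i j k].

Definition phi_ijk (n i j k : nat) (w : seq (seq nat)) : seq (seq (bool * bool)) :=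
  [seq ic n i j k (take p w) | p <- iota 0 (size w) & nth [::] w p == gkey i j k].

(* F = free product of copies of Z_2, one for each map sigma: relations sigma^2 = 1 *)
Definition F_rel (l r : seq (seq (bool * bool))) : Prop :=
  exists x, l = [:: x; x] /\ r = [::].

Definition F_trivial (w : seq (seq (bool * bool))) : Prop := wcong F_rel w [::].

From mathcomp Require Import all_boot zify.
From Stdlib Require Import FunctionalExtensionality.

Set Implicit Arguments.
Unset Strict Implicit.
Unset Printing Implicit Defensive.

(* Let s1 < s2 < s3 be the sorted i, j, k and pick a strand l outside {i, j, k}, which n >= 4
   allows.  Every generator occurs an even number of times in phi_n(b_ab), so
   phi_(i,j,k) o phi_n is multiplicative.  On a generator it is trivial unless a and b both lie
   in {i, j, k}, and on b_{s1 s2}, b_{s2 s3}, b_{s1 s3} it equals pq, rp, qr for three elements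
   p, q, r of F (up to the relations x^2 = 1).  These values are reproduced by a crossing model
   of the braid group on n - 1 strands: after deleting strand l, label the strands s1, s2, s3
   by the involutions pqp, p, prp and let each crossing sigma_k^{+1} (resp. sigma_k^{-1}) of two
   labelled strands emit the label of the left (resp. right) one.  With only three labelled
   strands the emitted word is invariant under the braid relations, hence it is trivial on
   the trivial braid obtained by deleting strand l from a Brunnian braid. *)

Section WordCongruence.
Variables (A : Type) (R : seq A -> seq A -> Prop).

Lemma wcong_ctx x y u v : wcong R u v -> wcong R (x ++ u ++ y) (x ++ v ++ y).
Proof.
elim=> [u' v' l r lr | w | w1 w2 _ IH | w1 w2 w3 _ IH1 _ IH2].
- by have := @wcong_step _ _ (x ++ u') (v' ++ y) _ _ lr; rewrite -!catA.
- exact: wcong_refl.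
- exact: wcong_sym.
- exact: wcong_trans IH2.
Qed.

Lemma wcong_cat u1 v1 u2 v2 :
  wcong R u1 v1 -> wcong R u2 v2 -> wcong R (u1 ++ u2) (v1 ++ v2).
Proof.
move=> e1 e2; apply: (@wcong_trans _ _ _ (v1 ++ u2)); first exact: (wcong_ctx [::] u2 e1).
by have := wcong_ctx v1 [::] e2; rewrite !cats0.
Qed.

End WordCongruence.

Notation Feq := (wcong F_rel).

Lemma F_cancel_square (x : seq (bool * bool)) u v : Feq (u ++ x :: x :: v) (u ++ v).
Proof.
have xx : Feq (x :: x :: v) v by apply: (@wcong_step _ _ [::] v [:: x; x] [::]); exists x.
by have := wcong_ctx u [::] xx; rewrite !cats0.
Qed.

Lemma F_cat_rev (v : seq (seq (bool * bool))) : Feq (v ++ rev v) [::].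
Proof.
elim: v => [|x v IH] /=; first exact: wcong_refl.
rewrite rev_cons -cats1 catA.
exact: wcong_trans (wcong_ctx [:: x] [:: x] IH) (F_cancel_square x [::] [::]).
Qed.

Section PhiAfter.
Variables n i j k : nat.
Local Notation key := (gkey i j k).
Local Notation ic := (ic n i j k).

Fixpoint phi_after (u v : seq (seq nat)) : seq (seq (bool * bool)) :=
  if v is x :: v' then (if x == key then [:: ic u] else [::]) ++ phi_after (rcons u x) v'
  else [::].

Lemma phi_after_take u v :
  [seq ic (u ++ take p v) | p <- iota 0 (size v) & nth [::] v p == key] = phi_after u v.
Proof.
elim: v u => [|x v IH] u //=.
rewrite -add1n iotaDl filter_map /= -(IH (rcons u x)).
case: (x == key) => /=; rewrite ?cats0 ?take0 -map_comp; last first.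
  by apply: eq_map => p /=; rewrite cat_rcons.
by congr (_ :: _); apply: eq_map => p /=; rewrite cat_rcons.
Qed.

Lemma phi_ijk_phi_after w : phi_ijk n i j k w = phi_after [::] w.
Proof. by rewrite /phi_ijk -phi_after_take. Qed.

Lemma phi_after_cat u v1 v2 :
  phi_after u (v1 ++ v2) = phi_after u v1 ++ phi_after (u ++ v1) v2.
Proof.
elim: v1 u => [|x v1 IH] u /=; first by rewrite cats0.
by rewrite IH -catA cat_rcons.
Qed.

Lemma phi_after_keyfree u v : key \notin v -> phi_after u v = [::].
Proof.
elim: v u => [|x v IH] u //=; rewrite inE negb_or => /andP[kx kv].
by rewrite eq_sym (negbTE kx) IH.
Qed.

Lemma phi_after_onekey u v1 v2 : key \notin v1 -> key \notin v2 ->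
  phi_after u (v1 ++ key :: v2) = [:: ic (u ++ v1)].
Proof. by move=> k1 k2; rewrite phi_after_cat phi_after_keyfree //= eqxx phi_after_keyfree. Qed.

Lemma phi_after_square u c1 c2 : key \notin c1 -> key \notin c2 ->
  phi_after u ((c1 ++ key :: c2) ++ (c1 ++ key :: c2)) =
    [:: ic (u ++ c1); ic (u ++ (c1 ++ key :: c2) ++ c1)].
Proof. by move=> k1 k2; rewrite phi_after_cat !phi_after_onekey // -catA. Qed.

(* [ic u] only sees the parities of the letters [a_{stl}] with [l] outside [{i,j,k}], none of
   which is the key letter [a_{ijk}]. *)
Definition same_parities (u u' : seq (seq nat)) :=
  forall y, y != key -> odd (count_mem y u) = odd (count_mem y u').

Lemma gkey_third_neq_key a b l : l \notin [:: i; j; k] -> gkey a b l != key.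
Proof.
move=> lT; apply: contra lT => /eqP E.
by rewrite -(mem_sort leq) -/(gkey i j k) -E /gkey mem_sort !inE eqxx !orbT.
Qed.

Lemma ic_same_parities u u' : same_parities u u' -> ic u = ic u'.
Proof.
move=> H; apply/eq_in_map => l; rewrite mem_filter => /andP[lT _].
by rewrite !oddD !H ?gkey_third_neq_key.
Qed.

Lemma phi_after_same_parities u u' v :
  same_parities u u' -> phi_after u v = phi_after u' v.
Proof.
elim: v u u' => [|x v IH] u u' H //=.
rewrite (ic_same_parities H) (IH _ (rcons u' x)) // => y ky.
by rewrite -!cats1 !count_cat !oddD H.
Qed.

Lemma phi_after_rev u u' v :
  same_parities u' (u ++ v) -> phi_after u (rev v) = rev (phi_after u' v).
Proof.
elim: v u u' => [|x v IH] u u' H //=.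
rewrite rev_cons -cats1 phi_after_cat rev_cat (IH u (rcons u' x)); last first.
  move=> y ky; rewrite -cats1 !count_cat /= !oddD H // !count_cat /= !oddD.
  by case: (odd (count_mem y u)); case: (odd (count_mem y v)); case: (x == y).
congr (_ ++ _) => /=; case: eqP => //= xkey; congr [:: _].
apply: ic_same_parities => y ky.
by rewrite H // !count_cat count_rev /= xkey eq_sym (negbTE ky).
Qed.

End PhiAfter.

Definition phi_letter n (x : nat * nat * bool) : seq (seq nat) :=
  let: (a, b, e) := x in if e then phi_gen_word n a b else rev (phi_gen_word n a b).

Definition c_block n a (s : seq nat) := flatten [seq rev (c_word n a m) | m <- s].

Definition c_prefix n a b := c_block n a (iota a.+1 (b - a.+1)).

Lemma phi_gen_wordE n a b :
  phi_gen_word n a b = c_prefix n a b ++ c_word n a b ++ c_word n a b ++ rev (c_prefix n a b).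
Proof. by []. Qed.

Lemma phi_letter_even n x y : ~~ odd (count_mem y (phi_letter n x)).
Proof.
case: x => [[a b] e]; rewrite /phi_letter.
case: e; rewrite ?count_rev phi_gen_wordE !count_cat count_rev !oddD.
all: by case: (odd (count_mem y (c_prefix n a b))); case: (odd (count_mem y (c_word n a b))).
Qed.

Section LetterImage.
Variables n i j k : nat.
Local Notation phi_after := (phi_after n i j k).

Definition letter_image x := phi_after [::] (phi_letter n x).

Lemma phi_ijk_phi_n w :
  phi_ijk n i j k (phi_n n w) = flatten [seq letter_image x | x <- w].
Proof.
rewrite phi_ijk_phi_after.
suff phi_from u : same_parities i j k u [::] ->
    phi_after u (phi_n n w) = flatten [seq letter_image x | x <- w] by exact: phi_from.
elim: w u => [|x w IH] u u_even //=.
rewrite phi_after_cat -/(phi_letter n x) /letter_image (phi_after_same_parities n _ u_even).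
congr (_ ++ _); apply: IH => y ky.
by rewrite count_cat oddD u_even // (negbTE (phi_letter_even n x y)).
Qed.

Lemma letter_imageE a b e :
  let P := c_prefix n a b in let c := c_word n a b in
  let M := phi_after P (c ++ c) in
  letter_image (a, b, e) =
    phi_after [::] P ++ (if e then M else rev M) ++ rev (phi_after [::] P).
Proof.
move=> P c M; rewrite /letter_image /phi_letter phi_gen_wordE -/P -/c (catA c c); case: e.
  rewrite phi_after_cat cat0s (phi_after_cat n i j k P) (phi_after_rev n (u' := [::])) //.
  move=> y _; rewrite !count_cat !oddD.
  by case: (odd (count_mem y P)); case: (odd (count_mem y c)).
rewrite !rev_cat revK -rev_cat -catA phi_after_cat cat0s (phi_after_cat n i j k P).
rewrite (phi_after_rev n (u := P) (u' := P)); last first.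
  by move=> y _; rewrite !count_cat !oddD addbb addbF.
rewrite (phi_after_rev n (u' := [::]) (v := P)) // => y _.
rewrite !(count_cat, count_rev) !oddD.
by case: (odd (count_mem y P)); case: (odd (count_mem y c)).
Qed.

End LetterImage.

Lemma gkey_eq a b c x y z : (gkey a b c == gkey x y z) = perm_eq [:: a; b; c] [:: x; y; z].
Proof. exact/eqP/(perm_sortP leq_total leq_trans anti_leq). Qed.

Lemma gkeyC a b c : gkey a b c = gkey b a c.
Proof.
by apply/(perm_sortP leq_total leq_trans anti_leq); rewrite (perm_catCA [:: a] [:: b]).
Qed.

Lemma gkeyCr a b c : gkey a b c = gkey a c b.
Proof.
by apply/(perm_sortP leq_total leq_trans anti_leq); rewrite perm_cons (perm_catC [:: b]).
Qed.

Lemma mem_gkey x a b c : (x \in gkey a b c) = [|| x == a, x == b | x == c].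
Proof. by rewrite mem_sort !inE. Qed.

Lemma perm_eq_pair (a b x y : nat) :
  perm_eq [:: a; b] [:: x; y] = (a == x) && (b == y) || (a == y) && (b == x).
Proof.
apply/idP/idP => [ab_xy | /orP[] /andP[/eqP-> /eqP->] //]; last first.
  by rewrite (perm_catC [:: y]).
have : a \in [:: x; y] by rewrite -(perm_mem ab_xy) mem_head.
rewrite !inE => /orP[] /eqP ax; move: ab_xy; rewrite ax.
  by rewrite perm_cons => /perm_mem/(_ b); rewrite !inE eqxx => /esym /eqP ->; rewrite !eqxx.
rewrite perm_sym (perm_catC [:: x]) perm_cons => /perm_mem/(_ b); rewrite !inE eqxx => /eqP ->.
by rewrite !eqxx orbT.
Qed.

Lemma gkey_eq_third a b m x y l : l != a -> l != b ->
  (gkey a b m == gkey x y l) = (m == l) && ((a == x) && (b == y) || (a == y) && (b == x)).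
Proof.
move=> la lb; rewrite gkey_eq; case: (eqVneq m l) => [->|ml] /=.
  rewrite -[[:: a; b; l]]/([:: a; b] ++ [:: l]) -[[:: x; y; l]]/([:: x; y] ++ [:: l]).
  by rewrite perm_cat2r perm_eq_pair.
apply/negP => /perm_mem/(_ l); rewrite !inE eqxx !orbT.
by rewrite (negbTE la) (negbTE lb) eq_sym (negbTE ml).
Qed.

Definition pair_word a b (s : seq nat) := [seq gkey a b m | m <- s & m != a].

Definition third_range n b := iota b.+1 (n - b) ++ iota 1 b.-1.

Lemma c_wordE n a b : c_word n a b = pair_word a b (third_range n b).
Proof. by []. Qed.

Lemma pair_word_split a b s z s' : z != a ->
  pair_word a b (s ++ z :: s') = pair_word a b s ++ gkey a b z :: pair_word a b s'.
Proof. by move=> za; rewrite /pair_word filter_cat map_cat /= za. Qed.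

Lemma mem_pair_word a b s y : y \in pair_word a b s -> (a \in y) && (b \in y).
Proof. by case/mapP => m _ ->; rewrite !mem_gkey !eqxx !orbT. Qed.

Lemma gkey_notin_pair_word a b s z : z != a -> z != b -> z \notin s ->
  gkey a b z \notin pair_word a b s.
Proof.
move=> za zb zs; apply/mapP => -[m]; rewrite mem_filter => /andP[_ ms] /eqP.
by rewrite eq_sym gkey_eq_third // !eqxx /= andbT => /eqP mz; rewrite -mz ms in zs.
Qed.

Lemma mem_c_prefix n a b y : y \in c_prefix n a b -> a \in y.
Proof.
case/flattenP => _ /mapP[m _ ->]; rewrite mem_rev => /mapP[m' _ ->].
by rewrite mem_gkey eqxx.
Qed.

Lemma mem_phi_letter n a b e y : y \in phi_letter n (a, b, e) -> a \in y.
Proof.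
have c_a z : z \in c_word n a b -> a \in z by case/mem_pair_word/andP.
by case: e; rewrite /= ?mem_rev phi_gen_wordE !mem_cat !mem_rev =>
  /or4P[/mem_c_prefix | /c_a | /c_a | /mem_c_prefix].
Qed.

Lemma iota_split st len z : st <= z < st + len ->
  iota st len = iota st (z - st) ++ z :: iota z.+1 (st + len - z.+1).
Proof.
move=> z_in; have {1}-> : len = (z - st) + (st + len - z.+1).+1 by lia.
by rewrite iotaD; have -> : st + (z - st) = z by lia.
Qed.

Lemma count_iota v s len : count_mem v (iota s len) = (s <= v < s + len).
Proof. by rewrite count_uniq_mem ?iota_uniq // mem_iota. Qed.

Lemma count_third_range n b l : 1 <= l <= n -> l != b -> count_mem l (third_range n b) = 1.
Proof. by move=> l_n lb; rewrite /third_range count_cat !count_iota; lia. Qed.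

Lemma count_notin (K : seq nat) (w : seq (seq nat)) a :
  (forall y, y \in w -> a \in y) -> a \notin K -> count_mem K w = 0.
Proof. by move=> w_a aK; apply/count_memPn; apply: contra aK => /w_a. Qed.

Lemma count_pair_word x y l a b s : l != a -> l != b ->
  count_mem (gkey x y l) (pair_word a b s) =
    ((a == x) && (b == y) || (a == y) && (b == x)) * count_mem l s.
Proof.
move=> la lb; rewrite /pair_word count_map count_filter.
set P := _ || _; transitivity (count (fun m => P && (m == l)) s).
  apply: eq_count => m /=; rewrite gkey_eq_third //.
  by case: (eqVneq m l) => [->|_]; rewrite ?eqxx ?la ?andbT ?andbF.
by case: P => /=; [rewrite mul1n | elim: s].
Qed.

Lemma count_c_word n x y l a b : 1 <= l <= n -> l != a -> l != b ->
  count_mem (gkey x y l) (c_word n a b) = (a == x) && (b == y) || (a == y) && (b == x).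
Proof. by move=> l_n la lb; rewrite c_wordE count_pair_word // count_third_range // muln1. Qed.

Lemma count_c_word_first n a o l m :
  1 <= o <= n -> 1 <= l <= n -> o != a -> l != a -> o != l ->
  count_mem (gkey a o l) (c_word n a m) = (m == o) || (m == l).
Proof.
move=> o_n l_n oa la ol; rewrite c_wordE; case: (eqVneq m l) => [->|ml].
  by rewrite (gkeyCr a o l) count_pair_word // count_third_range // !eqxx !orbT.
have lm : l != m by rewrite eq_sym.
by rewrite count_pair_word // count_third_range // eqxx (eq_sym a o) (negbTE oa) orbF muln1.
Qed.

Lemma count_c_prefix_first n a b o l :
  1 <= o <= n -> 1 <= l <= n -> o != a -> l != a -> o != l ->
  count_mem (gkey a o l) (c_prefix n a b) = (a < o < b) + (a < l < b).
Proof.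
move=> o_n l_n oa la ol; rewrite /c_prefix /c_block count_flatten -map_comp.
transitivity (count (fun m => (m == o) || (m == l)) (iota a.+1 (b - a.+1))).
  by elim: (iota _ _) => //= m s ->; rewrite count_rev count_c_word_first.
have count_between v : count_mem v (iota a.+1 (b - a.+1)) = (a < v < b).
  by rewrite count_iota; lia.
rewrite -!count_between; elim: (iota _ _) => //= m s ->.
by case: (eqVneq m o) => [->|_]; rewrite ?(negbTE ol) /=; case: (m == l) => /=; lia.
Qed.

Lemma count_c_prefix n a b x y l :
  1 <= x <= n -> 1 <= y <= n -> 1 <= l <= n -> x != y -> l != x -> l != y -> l != a ->
  count_mem (gkey x y l) (c_prefix n a b) =
    (a == x) * ((a < y < b) + (a < l < b)) + (a == y) * ((a < x < b) + (a < l < b)).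
Proof.
move=> x_n y_n l_n xy lx ly la; have yl : y != l by rewrite eq_sym.
case: (eqVneq a x) => [ax|ax].
  subst x; have ya : y != a by rewrite eq_sym.
  by rewrite count_c_prefix_first // (negbTE xy) mul1n mul0n addn0.
case: (eqVneq a y) => [ay|ay].
  subst y; have xa : x != a by rewrite eq_sym.
  have xl : x != l by rewrite eq_sym.
  by rewrite gkeyC count_c_prefix_first // mul1n mul0n.
rewrite (@count_notin _ _ a) //; first exact: mem_c_prefix.
by rewrite mem_gkey !negb_or ax ay eq_sym.
Qed.

(** * The values on the generators b_ab with a, b in {i, j, k} *)

Section SortedTriple.
Variables n i j k s1 s2 s3 : nat.
Hypothesis key_sorted : gkey i j k = [:: s1; s2; s3].
Hypothesis s_range : [/\ 0 < s1, s1 < s2, s2 < s3 & s3 <= n].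
Local Notation key := (gkey i j k).
Local Notation T := [:: s1; s2; s3].
Local Notation ic := (ic n i j k).
Local Notation phi_after := (phi_after n i j k).
Local Notation between23 := (iota s2.+1 (s3 - s2.+1)).
Local Notation wrap31 := (iota s3.+1 (n - s3) ++ iota 1 s1.-1).
Local Notation wrap32 := (iota s3.+1 (n - s3) ++ iota 1 s2.-1).

Lemma perm_ijk : perm_eq [:: i; j; k] T.
Proof. by rewrite -key_sorted perm_sym perm_sort. Qed.

Lemma s_in_range : [/\ 0 < s1 <= n, 0 < s2 <= n & 0 < s3 <= n].
Proof. by case: s_range => *; split; lia. Qed.

Lemma s_distinct : [/\ s1 != s2, s1 != s3 & s2 != s3].
Proof. by case: s_range => *; split; lia. Qed.

Lemma key_permutations :
  [/\ gkey s1 s2 s3 = key, gkey s2 s3 s1 = key & gkey s1 s3 s2 = key].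
Proof.
have key123 : gkey s1 s2 s3 = key.
  by rewrite key_sorted /gkey sorted_sort //=; [exact: leq_trans | case: s_range => *; lia].
by split; [| rewrite gkeyCr gkeyC | rewrite gkeyCr].
Qed.

Definition joint_parity (u u' : seq (seq nat)) l x y :=
  odd (count_mem (gkey x y l) u + count_mem (gkey x y l) u').

Lemma ic_eq_joint_parity u u' :
  (forall l, 1 <= l <= n -> l \notin T ->
     joint_parity u u' l s1 s2 = joint_parity u u' l s1 s3 /\
     joint_parity u u' l s1 s3 = joint_parity u u' l s2 s3) ->
  ic u = ic u'.
Proof.
move=> H; apply/eq_in_map => l.
rewrite mem_filter mem_iota (perm_mem perm_ijk) => /andP[lT l_n].
have /H/(_ lT)[e12 e23] : 1 <= l <= n by lia.
have jp_sym x y : joint_parity u u' l x y = joint_parity u u' l y x.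
  by rewrite /joint_parity gkeyC.
have jp x y : x \in T -> y \in T -> x != y ->
    joint_parity u u' l x y = joint_parity u u' l s1 s2.
  by rewrite !inE => /or3P[]/eqP-> /or3P[]/eqP->; rewrite ?eqxx // => _;
    rewrite ?[joint_parity _ _ _ s2 s1]jp_sym ?[joint_parity _ _ _ s3 _]jp_sym ?e12 ?e23.
have [iT jT kT] : [/\ i \in T, j \in T & k \in T].
  by rewrite -!(perm_mem perm_ijk) !inE !eqxx !orbT.
have /and3P[] : uniq [:: i; j; k].
  by case: s_range => *; rewrite (perm_uniq perm_ijk) /= !inE; lia.
rewrite !inE !negb_or => /andP[ij ik] jk.
move: (jp _ _ jT kT jk) (jp _ _ iT jT ij) (jp _ _ iT kT ik); rewrite /joint_parity !oddD.
by repeat match goal with |- context [odd (count_mem ?K ?w)] => case: (odd (count_mem K w)) end.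
Qed.

(* After the counting lemmas, every count is a sum of interval indicators in [l]; they are all
   decided once the position of [l] relative to [s1 < s2 < s3] is fixed. *)
Ltac count_letters l lT :=
  have [? ? ?] := s_in_range; have [? ? ?] := s_distinct;
  move: lT; rewrite !inE !negb_or => /and3P[? ? ?];
  rewrite /joint_parity !(count_cat, count_rev) ?count_c_prefix // ?count_c_word //;
  rewrite ?count_pair_word // ?count_cat ?count_iota ?eqxx;
  case: s_range => *;
  repeat match goal with |- context [?x == ?y] => have -> : (x == y) = false by lia end;
  (have [?|[?|[?|?]]] : l < s1 \/ s1 < l < s2 \/ s2 < l < s3 \/ s3 < l by lia);
  repeat match goal with |- context [(?x <= ?y) && (?y < ?z)] =>
    first [ have -> : (x <= y) && (y < z) = true by lia
          | have -> : (x <= y) && (y < z) = false by lia ] end;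
  by split.

Definition sigma_p := ic (c_prefix n s1 s2 ++ pair_word s1 s2 between23).
Definition sigma_q := ic (c_prefix n s1 s2 ++ c_word n s1 s2 ++ pair_word s1 s2 between23).
Definition sigma_r := ic (c_prefix n s2 s3 ++ pair_word s2 s3 wrap31).

Lemma ic_c23_second : ic (c_prefix n s2 s3 ++ c_word n s2 s3 ++ pair_word s2 s3 wrap31) = sigma_p.
Proof. by apply: ic_eq_joint_parity => l l_n lT; count_letters l lT. Qed.

Lemma ic_c13_prefix : ic (c_prefix n s1 s2 ++ rev (pair_word s1 s2 wrap32)) = sigma_q.
Proof. by apply: ic_eq_joint_parity => l l_n lT; count_letters l lT. Qed.

Lemma ic_c13_first : ic (c_prefix n s1 s3 ++ pair_word s1 s3 wrap32) = sigma_r.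
Proof. by apply: ic_eq_joint_parity => l l_n lT; count_letters l lT. Qed.

Lemma ic_c13_second : ic (c_prefix n s1 s3 ++ c_word n s1 s3 ++ pair_word s1 s3 wrap32) = sigma_q.
Proof. by apply: ic_eq_joint_parity => l l_n lT; count_letters l lT. Qed.

Lemma third_range_s2 : third_range n s2 = between23 ++ s3 :: wrap32.
Proof.
case: s_range => *; rewrite /third_range (@iota_split s2.+1 (n - s2) s3) -?catA; last by lia.
by have -> : s2.+1 + (n - s2) - s3.+1 = n - s3 by lia.
Qed.

Lemma third_range_s3 z : 0 < z < s3 ->
  third_range n s3 = (iota s3.+1 (n - s3) ++ iota 1 z.-1) ++ z :: iota z.+1 (s3.-1 - z).
Proof.
move=> z_s3; rewrite /third_range (@iota_split 1 s3.-1 z) ?catA; last by lia.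
have -> : 1 + s3.-1 - z.+1 = s3.-1 - z by lia.
by have -> : z - 1 = z.-1 by lia.
Qed.

Lemma phi_after_c_word_square u a b z s s' :
  gkey a b z = key -> z != a -> z != b -> z \notin s -> z \notin s' ->
  third_range n b = s ++ z :: s' ->
  phi_after u (c_word n a b ++ c_word n a b) =
    [:: ic (u ++ pair_word a b s); ic (u ++ c_word n a b ++ pair_word a b s)].
Proof.
move=> abz za zb zs zs' range_b; rewrite c_wordE range_b pair_word_split // abz.
by rewrite phi_after_square -?abz ?gkey_notin_pair_word.
Qed.

Lemma key_notin_c_block a s : {in s, forall m, m \notin T} -> key \notin c_block n a s.
Proof.
move=> sT; apply/flattenP => -[_ /mapP[m ms ->]]; rewrite mem_rev => /mem_pair_word /andP[_].
by rewrite key_sorted (negbTE (sT m ms)).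
Qed.

Lemma key_notin_c_prefix a b :
  {in T, forall m, (m <= a) || (b <= m)} -> key \notin c_prefix n a b.
Proof.
move=> Ta; apply: key_notin_c_block => m; rewrite mem_iota => m_ab; apply/negP => /Ta; lia.
Qed.

Lemma c_prefix_s13 :
  c_prefix n s1 s3 = c_prefix n s1 s2 ++ rev (c_word n s1 s2) ++ c_block n s1 between23.
Proof.
case: s_range => *; rewrite /c_prefix /c_block (@iota_split s1.+1 (s3 - s1.+1) s2); last by lia.
by rewrite map_cat flatten_cat; have -> : s1.+1 + (s3 - s1.+1) - s2.+1 = s3 - s2.+1 by lia.
Qed.

Lemma letter_image_s12 e :
  letter_image n i j k (s1, s2, e) = if e then [:: sigma_p; sigma_q] else [:: sigma_q; sigma_p].
Proof.
have [k123 _ _] := key_permutations; case: s_range => *.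
rewrite letter_imageE /= phi_after_keyfree; last first.
  by apply: key_notin_c_prefix => m; rewrite !inE => /or3P[]/eqP->; lia.
rewrite (phi_after_c_word_square _ k123 _ _ _ _ third_range_s2);
  try by rewrite ?mem_cat ?mem_iota; lia.
by case: e.
Qed.

Lemma letter_image_s23 e :
  letter_image n i j k (s2, s3, e) = if e then [:: sigma_r; sigma_p] else [:: sigma_p; sigma_r].
Proof.
have [_ k231 _] := key_permutations; case: s_range => *.
rewrite letter_imageE /= phi_after_keyfree; last first.
  by apply: key_notin_c_prefix => m; rewrite !inE => /or3P[]/eqP->; lia.
rewrite (phi_after_c_word_square _ k231 _ _ _ _ (third_range_s3 _));
  try by rewrite ?mem_cat ?mem_iota; lia.
by rewrite ic_c23_second; case: e.
Qed.

Lemma phi_after_c_prefix_s13 : phi_after [::] (c_prefix n s1 s3) = [:: sigma_q].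
Proof.
have [k123 _ _] := key_permutations; case: s_range => *.
rewrite c_prefix_s13 c_wordE third_range_s2 pair_word_split; last by lia.
rewrite rev_cat rev_cons -cats1 -!catA /= k123 catA phi_after_onekey ?ic_c13_prefix //.
  rewrite mem_cat negb_or mem_rev -{2}k123 gkey_notin_pair_word ?andbT; try lia.
    by apply: key_notin_c_prefix => m; rewrite !inE => /or3P[]/eqP->; lia.
  by rewrite mem_cat !mem_iota; lia.
rewrite mem_cat negb_or mem_rev key_notin_c_block ?andbT => [|m]; last first.
  by rewrite mem_iota !inE; lia.
by rewrite -k123 gkey_notin_pair_word // ?mem_iota; lia.
Qed.

Lemma letter_image_s13 e : letter_image n i j k (s1, s3, e) =
  if e then [:: sigma_q; sigma_r; sigma_q; sigma_q] else [:: sigma_q; sigma_q; sigma_r; sigma_q].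
Proof.
have [_ _ k132] := key_permutations; case: s_range => *.
rewrite letter_imageE /= phi_after_c_prefix_s13.
rewrite (phi_after_c_word_square _ k132 _ _ _ _ (third_range_s3 _));
  try by rewrite ?mem_cat ?mem_iota; lia.
by rewrite ic_c13_first ic_c13_second; case: e.
Qed.

Lemma letter_image_free_first a b e : a \notin T -> letter_image n i j k (a, b, e) = [::].
Proof.
move=> aT; apply: phi_after_keyfree; apply: contra aT => /mem_phi_letter.
by rewrite key_sorted.
Qed.

Lemma letter_image_free_second a b e : b \notin T -> Feq (letter_image n i j k (a, b, e)) [::].
Proof.
move=> bT; rewrite letter_imageE /= (phi_after_keyfree n (c_prefix n a b)); last first.
  by rewrite mem_cat orbb; apply: contra bT => /mem_pair_word /andP[_]; rewrite key_sorted.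
by case: e; exact: F_cat_rev.
Qed.

End SortedTriple.

(** * A crossing model of the braid group *)

Definition swap_pos k x := if x == k then k.+1 else if x == k.+1 then k else x.

Lemma swap_posK k : involutive (swap_pos k).
Proof. by move=> x; rewrite /swap_pos; do ! case: eqP; lia. Qed.

Lemma swap_pos_left k : swap_pos k k = k.+1.
Proof. by rewrite /swap_pos eqxx. Qed.

Lemma swap_pos_right k : swap_pos k k.+1 = k.
Proof. by rewrite /swap_pos; case: eqP; [lia | rewrite eqxx]. Qed.

Lemma swap_pos_out k x : x != k -> x != k.+1 -> swap_pos k x = x.
Proof. by rewrite /swap_pos => /negbTE -> /negbTE ->. Qed.

Section StrandModel.
Variables (A : Type) (R : seq A -> seq A -> Prop).

(* A state gives the label, if any, of the strand at each position; the crossing (k, positive)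
   swaps positions k and k+1 and emits the label of the left strand, (k, negative) that of the
   right one, provided both strands are labelled. *)
Local Notation state := (nat -> option (seq A)).

Definition crossing_word (left right : option (seq A)) (positive : bool) : seq A :=
  if (left, right) is (Some u, Some v) then if positive then u else v else [::].

Fixpoint emit (st : state) (s : seq (nat * bool)) : seq A :=
  if s is c :: s' then crossing_word (st c.1) (st c.1.+1) c.2 ++ emit (st \o swap_pos c.1) s'
  else [::].

Fixpoint state_after (st : state) (s : seq (nat * bool)) : state :=
  if s is c :: s' then state_after (st \o swap_pos c.1) s' else st.

Lemma emit_cat st s1 s2 : emit st (s1 ++ s2) = emit st s1 ++ emit (state_after st s1) s2.
Proof. by elim: s1 st => [|c s1 IH] st //=; rewrite IH catA. Qed.

Lemma state_after_cat st s1 s2 :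
  state_after st (s1 ++ s2) = state_after (state_after st s1) s2.
Proof. by elim: s1 st => [|c s1 IH] st //=. Qed.

Definition at_most_three_labelled (st : state) :=
  exists2 ts : seq nat, size ts <= 3 & forall x, st x -> x \in ts.

Definition involutive_labels (st : state) :=
  forall x u, st x = Some u -> wcong R (u ++ u) [::].

Lemma state_after_labels st s :
  at_most_three_labelled st -> involutive_labels st ->
  at_most_three_labelled (state_after st s) /\ involutive_labels (state_after st s).
Proof.
elim: s st => [|c s IH] st few inv //=; apply: IH; last by move=> x u /inv.
case: few => ts size_ts st_ts; exists (map (swap_pos c.1) ts); first by rewrite size_map.
by move=> x /st_ts x_ts; rewrite -[x](swap_posK c.1) map_f.
Qed.

Lemma crossing_wordP (l r : option (seq A)) b : l && r \/ crossing_word l r b = [::].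
Proof. by case: l => [u|]; case: r => [v|]; [left | right..]. Qed.

Lemma state_after_braid_rel N l r st :
  braid_rel N l r -> state_after st l = state_after st r.
Proof.
case=> [[k [b [_ [-> ->]]]] | [[k [m [_ [_ [km [-> ->]]]]]] | [k [_ [_ [-> ->]]]]]];
  by apply: functional_extensionality => x /=; congr st; rewrite /swap_pos; do ! case: eqP; lia.
Qed.

Lemma emit_cancel_pair k b st : involutive_labels st ->
  wcong R (emit st [:: (k, b); (k, ~~ b)]) [::].
Proof.
move=> st_inv; rewrite /= swap_pos_left swap_pos_right cats0.
case ek: (st k) => [u|]; case ek1: (st k.+1) => [v|]; try exact: wcong_refl.
by case: b; [apply: st_inv ek | apply: st_inv ek1].
Qed.

(* This is where at most three labelled strands are needed: two labels emitted by disjoint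
   crossings need not commute. *)
Lemma emit_far_commute k m st : k.+1 < m -> at_most_three_labelled st ->
  emit st [:: (k, true); (m, true)] = emit st [:: (m, true); (k, true)].
Proof.
move=> km [ts size_ts st_ts].
have [/= -> -> -> ->] : [/\ swap_pos k m = m, swap_pos k m.+1 = m.+1,
    swap_pos m k = k & swap_pos m k.+1 = k.+1] by split; apply: swap_pos_out; lia.
rewrite !cats0; case: (crossing_wordP (st k) (st k.+1) true) => [/andP[lk lk1] | ->]; last first.
  by rewrite cats0.
case: (crossing_wordP (st m) (st m.+1) true) => [/andP[lm lm1] | ->]; last by rewrite cats0.
have uniq4 : uniq [:: k; k.+1; m; m.+1] by rewrite /= !inE; lia.
have sub4 : {subset [:: k; k.+1; m; m.+1] <= ts}.
  by move=> x; rewrite !inE => /or4P[] /eqP ->; apply: st_ts.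
by have := uniq_leq_size uniq4 sub4; rewrite leqNgt (leq_ltn_trans size_ts).
Qed.

Lemma emit_braid_relation k st : involutive_labels st ->
  wcong R (emit st [:: (k, true); (k.+1, true); (k, true)])
          (emit st [:: (k.+1, true); (k, true); (k.+1, true)]).
Proof.
move=> st_inv; have [out1 out2] : swap_pos k k.+2 = k.+2 /\ swap_pos k.+1 k = k.
  by split; apply: swap_pos_out; lia.
rewrite /= !(swap_pos_left, swap_pos_right, out1, out2) !cats0.
case ea: (st k) => [a|]; case eb: (st k.+1) => [b|]; case ec: (st k.+2) => [c|] /=;
  rewrite ?cats0; try exact: wcong_refl.
rewrite /crossing_word /= catA; apply: (@wcong_trans _ _ _ b).
  exact: wcong_cat (st_inv _ _ ea) (wcong_refl R b).
by apply: wcong_sym; have := wcong_cat (wcong_refl R b) (st_inv _ _ ea); rewrite cats0 catA.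
Qed.

Lemma braid_rel_emit N l r st : braid_rel N l r ->
  at_most_three_labelled st -> involutive_labels st -> wcong R (emit st l) (emit st r).
Proof.
move=> + few inv.
case=> [[k [b [_ [-> ->]]]] | [[k [m [_ [_ [km [-> ->]]]]]] | [k [_ [_ [-> ->]]]]]].
- exact: emit_cancel_pair.
- by rewrite emit_far_commute //; exact: wcong_refl.
- exact: emit_braid_relation.
Qed.

Lemma braid_eq_emit N s1 s2 st : braid_eq N s1 s2 ->
  at_most_three_labelled st -> involutive_labels st ->
  state_after st s1 = state_after st s2 /\ wcong R (emit st s1) (emit st s2).
Proof.
move=> E; elim: E st => [u v l r lr | w | w1 w2 _ IH | w1 w2 w3 _ IH1 _ IH2] st few inv.
- have [few' inv'] := state_after_labels u few inv.
  rewrite !emit_cat !state_after_cat (state_after_braid_rel _ lr); split => //.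
  exact: wcong_cat (wcong_refl R _) (wcong_cat (braid_rel_emit lr few' inv') (wcong_refl R _)).
- by split; last exact: wcong_refl.
- by have [e1 e2] := IH st few inv; split; last exact: wcong_sym.
- have [e1 e2] := IH1 st few inv; have [e3 e4] := IH2 st few inv.
  by split; [rewrite e1 | exact: wcong_trans e4].
Qed.

End StrandModel.

Section PureBraidEmission.
Variable A : Type.
Implicit Types (st : nat -> option (seq A)).

Definition cycle_pos c b x := if x == c then b else if c < x <= b then x.-1 else x.

Lemma cycle_pos_id b : cycle_pos b b = id.
Proof.
apply: functional_extensionality => x; rewrite /cycle_pos.
by case: eqP => [->|_] //; case: ifP; lia.
Qed.

Lemma cycle_pos_at c b : cycle_pos c b c = b.
Proof. by rewrite /cycle_pos eqxx. Qed.

Lemma cycle_pos_below c b x : x < c -> cycle_pos c b x = x.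
Proof. by rewrite /cycle_pos; repeat case: ifP; lia. Qed.

Lemma cycle_pos_above c b x : c < x <= b -> cycle_pos c b x = x.-1.
Proof. by rewrite /cycle_pos; repeat case: ifP; lia. Qed.

Lemma cycle_pos_swap_down st c b :
  c < b -> (st \o cycle_pos c.+1 b) \o swap_pos c = st \o cycle_pos c b.
Proof.
move=> cb; apply: functional_extensionality => x /=; congr st.
rewrite /swap_pos; case: eqP => [->|xc]; [|case: eqP => [->|xc1]];
  by rewrite /cycle_pos; repeat case: ifP; lia.
Qed.

Lemma cycle_pos_swap_up st c b :
  c < b -> (st \o cycle_pos c b) \o swap_pos c = st \o cycle_pos c.+1 b.
Proof.
move=> cb; rewrite -(cycle_pos_swap_down st cb).
by apply: functional_extensionality => x /=; rewrite swap_posK.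
Qed.

Lemma emit_shift_left st b c d : c + d <= b ->
  emit (st \o cycle_pos (c + d) b) [seq (x, true) | x <- rev (iota c d)] =
    flatten [seq crossing_word (st x) (st b) true | x <- rev (iota c d)] /\
  state_after (st \o cycle_pos (c + d) b) [seq (x, true) | x <- rev (iota c d)] =
    st \o cycle_pos c b.
Proof.
elim: d c => [|d IH] c cdb; first by rewrite addn0.
rewrite /= rev_cons -!cats1 !map_cat emit_cat state_after_cat flatten_cat addnS -addSn.
have cdb' : c.+1 + d <= b by lia.
have cb : c < b by lia.
have [-> ->] := IH _ cdb'.
by rewrite /= cycle_pos_at cycle_pos_below // cycle_pos_swap_down.
Qed.

Lemma emit_shift_right st b c d : c + d <= b ->
  emit (st \o cycle_pos c b) [seq (x, false) | x <- iota c d] =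
    flatten [seq crossing_word (st b) (st x) false | x <- iota c d] /\
  state_after (st \o cycle_pos c b) [seq (x, false) | x <- iota c d] =
    st \o cycle_pos (c + d) b.
Proof.
elim: d c => [|d IH] c cdb; first by rewrite addn0.
have cdb' : c.+1 + d <= b by lia.
have cb : c < b by lia.
have c1b : c < c.+1 <= b by lia.
rewrite /= cycle_pos_at cycle_pos_above // cycle_pos_swap_up //.
by have [-> ->] := IH _ cdb'; rewrite addSnnS.
Qed.

Definition generator_emission st a b e :=
  let mid := iota a.+1 (b - a.+1) in
  flatten [seq crossing_word (st x) (st b) true | x <- rev mid] ++
  crossing_word (st a) (st b) e ++ crossing_word (st b) (st a) e ++
  flatten [seq crossing_word (st b) (st x) false | x <- mid].

Lemma emit_pb_letter st a b e : a < b ->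
  emit st (pb_letter_braid (a, b, e)) = generator_emission st a b e /\
  state_after st (pb_letter_braid (a, b, e)) = st.
Proof.
move=> ab; have mid_b : a.+1 + (b - a.+1) = b by lia.
have st_id : st \o cycle_pos b b = st by rewrite cycle_pos_id.
have [emit_left after_left] := emit_shift_left st (eq_leq mid_b).
have [emit_right after_right] := emit_shift_right st (eq_leq mid_b).
rewrite mid_b st_id in emit_left after_left after_right.
rewrite /pb_letter_braid !emit_cat !state_after_cat emit_left after_left /=.
rewrite swap_pos_left swap_pos_right !cycle_pos_at !cycle_pos_below //.
rewrite cycle_pos_swap_down // cycle_pos_swap_up // emit_right after_right.
by rewrite cats0 -!catA.
Qed.

Lemma emit_pb_braid st w :
  all (fun x : nat * nat * bool => let: (a, b, _) := x in a < b) w ->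
  emit st (pb_braid w) =
    flatten [seq (let: (a, b, e) := x in generator_emission st a b e) | x <- w].
Proof.
elim: w => [|[[a b] e] w IH] //= /andP[ab w_ok].
have [emit_ab after_ab] := emit_pb_letter st e ab.
by rewrite /pb_braid /= emit_cat emit_ab after_ab -IH.
Qed.

Definition labels_between st a b :=
  flatten [seq odflt [::] (st x) | x <- iota a.+1 (b - a.+1)].

Lemma generator_emissionE st a b e : (forall x u, st x = Some u -> rev u = u) ->
  generator_emission st a b e =
    if st b is Some v then
      rev (labels_between st a b) ++
      (if st a is Some u then if e then u ++ v else v ++ u else [::]) ++
      labels_between st a b
    else [::].
Proof.
move=> pal; rewrite /generator_emission /labels_between.
case: (st b) => [v|]; last first.
  have nil_right s positive :
      flatten [seq crossing_word (st x) None positive | x <- s] = [::].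
    by elim: s => //= x s ->; case: (st x).
  have nil_left s positive :
      flatten [seq crossing_word None (st x) positive | x <- s] = [::] by elim: s.
  by rewrite nil_right nil_left; case: (st a).
have -> : flatten [seq crossing_word (st x) (Some v) true | x <- rev (iota a.+1 (b - a.+1))] =
    rev (flatten [seq odflt [::] (st x) | x <- iota a.+1 (b - a.+1)]).
  rewrite rev_flatten -map_comp -map_rev; congr flatten; apply: eq_map => x /=.
  by case ex: (st x) => [u|] //=; rewrite (pal _ _ ex).
have -> : [seq crossing_word (Some v) (st x) false | x <- iota a.+1 (b - a.+1)] =
    [seq odflt [::] (st x) | x <- iota a.+1 (b - a.+1)].
  by apply: eq_map => x; case: (st x).
by case: (st a) => [u|]; case: e; rewrite /crossing_word /= -?catA.
Qed.

End PureBraidEmission.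

(** * Deleting a strand *)

Section ThreeStrandLabels.
Variables (A : Type) (t1 t2 t3 : nat) (L1 L2 L3 : seq A).
Hypothesis t_sorted : t1 < t2 < t3.
Hypotheses (pal1 : rev L1 = L1) (pal2 : rev L2 = L2) (pal3 : rev L3 = L3).

Definition three_labels x :=
  if x == t1 then Some L1 else if x == t2 then Some L2 else if x == t3 then Some L3 else None.

Lemma three_labels_free x : x \notin [:: t1; t2; t3] -> three_labels x = None.
Proof. by rewrite !inE /three_labels => /norP[/negbTE-> /norP[/negbTE-> /negbTE->]]. Qed.

Lemma three_labels_at :
  [/\ three_labels t1 = Some L1, three_labels t2 = Some L2 & three_labels t3 = Some L3].
Proof. by rewrite /three_labels !eqxx; split => //; do ! case: eqP => //; lia. Qed.

Lemma three_labels_few : at_most_three_labelled three_labels.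
Proof. by exists [:: t1; t2; t3] => // x; apply: contraTT => /three_labels_free ->. Qed.

Lemma three_labels_palindromic x u : three_labels x = Some u -> rev u = u.
Proof. by rewrite /three_labels; do ! case: eqP => _; move=> // [<-]. Qed.

Lemma flatten_labels_free s : {in s, forall x, x \notin [:: t1; t2; t3]} ->
  flatten [seq odflt [::] (three_labels x) | x <- s] = [::].
Proof.
elim: s => //= x s IH free_xs.
by rewrite three_labels_free ?IH // => [y ys|]; apply: free_xs; rewrite inE ?ys ?orbT ?eqxx.
Qed.

Lemma labels_between_free a b :
  {in iota a.+1 (b - a.+1), forall x, x \notin [:: t1; t2; t3]} ->
  labels_between three_labels a b = [::].
Proof. exact: flatten_labels_free. Qed.

Lemma three_labels_emission12 e :
  generator_emission three_labels t1 t2 e = if e then L1 ++ L2 else L2 ++ L1.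
Proof.
rewrite generator_emissionE ?labels_between_free => [| x | ]; last exact: three_labels_palindromic.
  by have [-> -> _] := three_labels_at; case: e; rewrite /= cats0.
by rewrite mem_iota !inE; lia.
Qed.

Lemma three_labels_emission23 e :
  generator_emission three_labels t2 t3 e = if e then L2 ++ L3 else L3 ++ L2.
Proof.
rewrite generator_emissionE ?labels_between_free => [| x | ]; last exact: three_labels_palindromic.
  by have [_ -> ->] := three_labels_at; case: e; rewrite /= cats0.
by rewrite mem_iota !inE; lia.
Qed.

Lemma three_labels_emission13 e :
  generator_emission three_labels t1 t3 e = L2 ++ (if e then L1 ++ L3 else L3 ++ L1) ++ L2.
Proof.
have [t1_label t2_label t3_label] := three_labels_at.
have between13 : labels_between three_labels t1 t3 = L2.
  rewrite /labels_between (@iota_split t1.+1 (t3 - t1.+1) t2); last by lia.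
  rewrite map_cat flatten_cat /= t2_label.
  by rewrite !flatten_labels_free ?cats0 // => x; rewrite mem_iota !inE; lia.
rewrite generator_emissionE; last exact: three_labels_palindromic.
by rewrite t1_label t3_label between13 pal2.
Qed.

End ThreeStrandLabels.

Section DeleteStrand.
Variables n i j k s1 s2 s3 l : nat.
Hypothesis key_sorted : gkey i j k = [:: s1; s2; s3].
Hypothesis s_range : [/\ 0 < s1, s1 < s2, s2 < s3 & s3 <= n].
Hypothesis lT : l \notin [:: s1; s2; s3].
Local Notation T := [:: s1; s2; s3].
Local Notation p := (sigma_p n i j k s1 s2 s3).
Local Notation q := (sigma_q n i j k s1 s2 s3).
Local Notation r := (sigma_r n i j k s1 s2 s3).
Local Notation letter_image := (letter_image n i j k).

(* The labels are chosen so that the emission of b_{s1 s2}, b_{s2 s3}, b_{s1 s3} is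
   pqp.p, p.prp and p.pqp.prp.p, i.e. pq, rp and qr in F. *)
Definition deleted_labels :=
  three_labels (unbump l s1) (unbump l s2) (unbump l s3) [:: p; q; p] [:: p] [:: p; r; p].

Lemma unbump_sorted : unbump l s1 < unbump l s2 < unbump l s3.
Proof. by move: lT; rewrite !inE /unbump; case: s_range => *; lia. Qed.

Lemma unbump_free a : a != l -> a \notin T ->
  unbump l a \notin [:: unbump l s1; unbump l s2; unbump l s3].
Proof. by move: lT; rewrite !inE /unbump => *; lia. Qed.

Lemma deleted_labels_few : at_most_three_labelled deleted_labels.
Proof. exact: three_labels_few. Qed.

Lemma deleted_labels_palindromic x u : deleted_labels x = Some u -> rev u = u.
Proof. exact: three_labels_palindromic. Qed.

Lemma deleted_labels_involutive : involutive_labels F_rel deleted_labels.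
Proof. by move=> x u /deleted_labels_palindromic {2}<-; exact: F_cat_rev. Qed.

Lemma letter_image_labelled a b e : a \in T -> b \in T -> a < b ->
  Feq (letter_image (a, b, e)) (generator_emission deleted_labels (unbump l a) (unbump l b) e).
Proof.
have [? ? ? ?] := s_range; have t_sorted := unbump_sorted.
rewrite !inE => /or3P[]/eqP-> /or3P[]/eqP-> ab; try lia.
- rewrite (letter_image_s12 key_sorted s_range) three_labels_emission12 //.
  case: e; apply: wcong_sym; first exact: (F_cancel_square p [:: p; q] [::]).
  exact: (F_cancel_square p [::] [:: q; p]).
- rewrite (letter_image_s13 key_sorted s_range) three_labels_emission13 //.
  case: e => /=.
  + apply: wcong_trans (F_cancel_square q [:: q; r] [::]) _; apply: wcong_sym.
    apply: wcong_trans (F_cancel_square p [::] _) _.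
    apply: wcong_trans (F_cancel_square p [:: q] _) _.
    exact: (F_cancel_square p [:: q; r] [::]).
  + apply: wcong_trans (F_cancel_square q [::] [:: r; q]) _; apply: wcong_sym.
    apply: wcong_trans (F_cancel_square p [::] _) _.
    apply: wcong_trans (F_cancel_square p [:: r] _) _.
    exact: (F_cancel_square p [:: r; q] [::]).
- rewrite (letter_image_s23 key_sorted s_range) three_labels_emission23 //.
  case: e; apply: wcong_sym; first exact: (F_cancel_square p [::] [:: r; p]).
  exact: (F_cancel_square p [:: p; r] [::]).
Qed.

Lemma letter_image_kept a b e : a < b -> a != l -> b != l ->
  Feq (letter_image (a, b, e)) (generator_emission deleted_labels (unbump l a) (unbump l b) e).
Proof.
move=> ab al bl; case bT: (b \in T); last first.
  rewrite generator_emissionE /deleted_labels ?three_labels_free ?unbump_free ?bT //.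
    by apply: (letter_image_free_second n key_sorted); rewrite bT.
  exact: three_labels_palindromic.
case aT: (a \in T); last first.
  rewrite (letter_image_free_first n key_sorted) ?aT //.
  rewrite generator_emissionE; last exact: deleted_labels_palindromic.
  have -> : deleted_labels (unbump l a) = None.
    by apply: three_labels_free; rewrite unbump_free ?aT.
  case: (deleted_labels (unbump l b)) => [v|] /=; last exact: wcong_refl.
  set B := labels_between _ _ _; apply: wcong_sym.
  by have := F_cat_rev (rev B); rewrite revK.
exact: letter_image_labelled.
Qed.

Lemma letter_image_deleted a b e :
  ~~ ((a != l) && (b != l)) -> Feq (letter_image (a, b, e)) [::].
Proof.
rewrite negb_and !negbK => /orP[] /eqP ->; last exact: (letter_image_free_second n key_sorted).
by rewrite (letter_image_free_first n key_sorted) //; exact: wcong_refl.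
Qed.

Lemma delete_strand_cons a b e w : delete_strand l ((a, b, e) :: w) =
  if (a != l) && (b != l) then (unbump l a, unbump l b, e) :: delete_strand l w
  else delete_strand l w.
Proof.
have unbumpE x : unbump l x = if l < x then x.-1 else x by rewrite /unbump; case: ltnP; lia.
by rewrite /delete_strand /= !unbumpE; case: ifP.
Qed.

Lemma delete_strand_increasing w : pb_valid n w ->
  all (fun x : nat * nat * bool => let: (a, b, _) := x in a < b) (delete_strand l w).
Proof.
elim: w => [|[[a b] e] w IH] //= /andP[/andP[/andP[_ ab] _] valid].
rewrite delete_strand_cons; case: ifP => [/andP[al bl]|_]; last exact: IH.
by rewrite /= IH // andbT /unbump; lia.
Qed.

Lemma phi_n_emission w : pb_valid n w ->
  Feq (phi_ijk n i j k (phi_n n w)) (emit deleted_labels (pb_braid (delete_strand l w))).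
Proof.
move=> valid; rewrite phi_ijk_phi_n emit_pb_braid ?delete_strand_increasing //.
elim: w valid => [|[[a b] e] w IH] /=; first by move=> _; exact: wcong_refl.
case/andP => /andP[/andP[_ ab] _] valid; rewrite delete_strand_cons.
case: ifP => [/andP[al bl] | /negbT dropped] /=.
  exact: wcong_cat (letter_image_kept e ab al bl) (IH valid).
exact: wcong_cat (letter_image_deleted e dropped) (IH valid).
Qed.

Lemma phi_n_trivial w : pb_valid n w -> pb_trivial n.-1 (delete_strand l w) ->
  F_trivial (phi_ijk n i j k (phi_n n w)).
Proof.
move=> valid trivial_l; apply: wcong_trans (phi_n_emission valid) _.
exact: (braid_eq_emit trivial_l deleted_labels_few deleted_labels_involutive).2.
Qed.

End DeleteStrand.

Lemma gkey_sorted i j k : i != j -> j != k -> i != k ->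
  exists s1 s2 s3, gkey i j k = [:: s1; s2; s3] /\ s1 < s2 < s3.
Proof.
move=> ij jk ik; have uniq_key : uniq (gkey i j k).
  by rewrite sort_uniq /= !inE negb_or ij ik jk.
have : sorted ltn (gkey i j k).
  by rewrite ltn_sorted_uniq_leq uniq_key sort_sorted //; exact: leq_total.
have : size (gkey i j k) = 3 by rewrite size_sort.
case: (gkey i j k) => [|s1 [|s2 [|s3 [|? ?]]]] // _ /and3P[s12 s23 _].
by exists s1, s2, s3; split => //; apply/andP.
Qed.

Theorem mainTheorem2 (n : nat) (w : seq (nat * nat * bool)) (i j k : nat) :
  4 <= n -> pb_valid n w -> brunnian n w ->
  1 <= i <= n -> 1 <= j <= n -> 1 <= k <= n ->
  i != j -> j != k -> i != k ->
  F_trivial (phi_ijk n i j k (phi_n n w)).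
Proof.
move=> n4 valid brunnian_w i_n j_n k_n ij jk ik.
have [s1 [s2 [s3 [key_sorted /andP[s12 s23]]]]] := gkey_sorted ij jk ik.
have s_in x : x \in [:: s1; s2; s3] -> 1 <= x <= n.
  by rewrite -key_sorted mem_gkey => /or3P[] /eqP->.
have s_range : [/\ 0 < s1, s1 < s2, s2 < s3 & s3 <= n].
  have := s_in s1; have := s_in s3; rewrite !inE !eqxx !orbT => /(_ isT) ? /(_ isT) ?.
  by split; lia.
have [l l_n lT] : exists2 l, 1 <= l <= n & l \notin [:: s1; s2; s3].
  case: s_range => *; case: (ltnP 1 s1) => [?|?]; first by exists 1; rewrite ?inE; lia.
  case: (ltnP 2 s2) => [?|?]; first by exists 2; rewrite ?inE; lia.
  case: (ltnP 3 s3) => [?|?]; first by exists 3; rewrite ?inE; lia.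
  by exists 4; rewrite ?inE; lia.
exact: phi_n_trivial key_sorted s_range lT w valid (brunnian_w l l_n).
Qed.
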